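(* There exists an Orlicz function $\Phi$ on $[0,\infty)$ such that $C_\Phi^\infty\cong\{t\}$ and $E_\Phi^\infty\not\equiv\{t\}$.
   Context: An Orlicz function is an increasing convex function $F$ on $[0,\infty)$ with $F(0)=0$ and $\lim_{t\to\infty}F(t)=\infty$. For an Orlicz function $F$ and $A>0$, let $E_{F,A}^\infty$ be the closure in $C[0,1]$ of the set of functions $\{x\mapsto F(xy)/F(y):\ y>A\}$ (on $[0,1]$); set $E_F^\infty:=\bigcap_{A>0}E_{F,A}^\infty$ and $C_F^\infty:=\overline{\mathrm{conv}\,E_F^\infty}$ (closure in $C[0,1]$ of the convex hull). For a set $S$ of functions on $[0,1]$ and a function $\varphi$ on $[0,1]$, write $S\cong\{\varphi\}$ if for every $H\in S$ there is a constant $C=C(H)>0$ with $C^{-1}\varphi(t)\le H(t)\le C\varphi(t)$ for all $0<t\le 1$; write $S\equiv\{\varphi\}$ if there is a single constant $C>0$ such that this holds for all $H\in S$. *)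

From Stdlib Require Import Reals.
Open Scope R_scope.

Definition Orlicz (F : R -> R) : Prop :=
  F 0 = 0 /\
  (forall s t, 0 <= s -> s < t -> F s < F t) /\
  (forall s t l, 0 <= s -> 0 <= t -> 0 <= l <= 1 ->
      F (l * s + (1 - l) * t) <= l * F s + (1 - l) * F t) /\
  (forall M, exists T, forall t, T <= t -> M <= F t).

(* Functions on [0,1] are represented by functions R -> R; only their
   values on [0,1] matter. *)
Definition cont01 (g : R -> R) : Prop :=
  forall x, 0 <= x <= 1 -> forall eps, 0 < eps -> exists delta, 0 < delta /\
    forall z, 0 <= z <= 1 -> Rabs (z - x) < delta -> Rabs (g z - g x) < eps.

Definition closure01 (S : (R -> R) -> Prop) (g : R -> R) : Prop :=
  cont01 g /\
  forall eps, 0 < eps -> exists h, S h /\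
    forall x, 0 <= x <= 1 -> Rabs (g x - h x) <= eps.

Definition dilations (F : R -> R) (A : R) (h : R -> R) : Prop :=
  exists y, A < y /\ forall x, 0 <= x <= 1 -> h x = F (x * y) / F y.

Definition E_FA (F : R -> R) (A : R) : (R -> R) -> Prop :=
  closure01 (dilations F A).

Definition E_F (F : R -> R) (g : R -> R) : Prop :=
  forall A, 0 < A -> E_FA F A g.

Definition conv01 (S : (R -> R) -> Prop) (h : R -> R) : Prop :=
  exists (n : nat) (lam : nat -> R) (gs : nat -> R -> R),
    (forall i, (i <= n)%nat -> 0 <= lam i /\ S (gs i)) /\
    sum_f_R0 lam n = 1 /\
    forall x, 0 <= x <= 1 -> h x = sum_f_R0 (fun i => lam i * gs i x) n.

Definition C_F (F : R -> R) : (R -> R) -> Prop := closure01 (conv01 (E_F F)).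

(* S ≅ {phi} : constant depending on H *)
Definition equiv_each (S : (R -> R) -> Prop) (phi : R -> R) : Prop :=
  forall H, S H -> exists C, 0 < C /\
    forall t, 0 < t <= 1 -> / C * phi t <= H t /\ H t <= C * phi t.

(* S ≡ {phi} : one uniform constant *)
Definition equiv_unif (S : (R -> R) -> Prop) (phi : R -> R) : Prop :=
  exists C, 0 < C /\ forall H, S H ->
    forall t, 0 < t <= 1 -> / C * phi t <= H t /\ H t <= C * phi t.

From Stdlib Require Import Reals.
Open Scope R_scope.
From Stdlib Require Import Lra Lia Psatz ZArith Classical ClassicalEpsilon.

(* [Phi] is piecewise linear, [Phi z = z + sum_i (s_(i+1) - s_i) (z - 2^i)_+],
   so its slope on [2^n, 2^(n+1)] is [s_n = exp (sum_(i<n) r_i)].  The rate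
   [r_i] equals [1/j] on the N-th cluster of scales [4^N <= i < 4^N + j^2],
   where the type [j = j_N] takes every value [>= 2] infinitely often, and
   vanishes between the (very sparse) clusters.

   1. For any Orlicz [F], normalized dilations [F(x y)/F(y)] lie below the
      identity.  If [F] has "two regimes" (every late dilation is either
      [>= c x] on [[delta,1]] or [>= x - eps] on [[0,1]]), the dichotomy passes
      to [E_F], to convex combinations (with constants halved) and to uniform
      limits, which yields [C_F ≅ {t}].
   2. [Phi] has two regimes: on a short window of scales either all rates are
      small, and dilations are close to the identity, or the window meets a
      single cluster, whose total log-slope growth [j] bounds the damping.
   3. At the end of a cluster of type [j], dilations of [Phi] approximate the
      profile of a model function that gains a factor of order [j] over [j^2]
      scales.  These profiles lie in [E_Phi], yet the one of type [j] is below
      [t / C] at [t = 2^-(j^2)] as soon as [j > 2 C]: no uniform constant. *)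

Lemma Rabs_le_between x e : Rabs x <= e -> - e <= x <= e.
Proof. intros H. unfold Rabs in H. destruct (Rcase_abs x); lra. Qed.

Lemma Orlicz_pos F : Orlicz F -> forall z, 0 < z -> 0 < F z.
Proof. intros [H0 [Hmono _]] z Hz. rewrite <- H0. apply Hmono; lra. Qed.

Lemma Orlicz_nonneg F : Orlicz F -> forall z, 0 <= z -> 0 <= F z.
Proof.
  intros HF z [Hz | <-]; [left; apply (Orlicz_pos F HF z Hz) |].
  destruct HF as [H0 _]; lra.
Qed.

Definition below_id (h : R -> R) : Prop :=
  forall x, 0 <= x <= 1 -> 0 <= h x <= x.

Definition dominates (D : R -> Prop) (phi h : R -> R) : Prop :=
  forall x, D x -> phi x <= h x.

(* Convexity of [F] with [F 0 = 0] gives [F (x y) <= x F y]: every normalized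
   dilation lies below the identity. *)
Lemma dilation_below_id F A : Orlicz F -> 0 <= A ->
  forall h, dilations F A h -> below_id h.
Proof.
  intros HF HA h [y [Hy Hh]] x Hx. rewrite (Hh x Hx).
  pose proof (Orlicz_pos F HF y ltac:(lra)) as Hpos. split.
  - apply Rle_mult_inv_pos; [apply (Orlicz_nonneg F HF); nra | lra].
  - destruct HF as [HF0 [_ [Hconv _]]].
    pose proof (Hconv y 0 x ltac:(lra) ltac:(lra) Hx) as C.
    replace (x * y + (1 - x) * 0) with (x * y) in C by ring. rewrite HF0 in C.
    apply (Rmult_le_reg_r (F y)); auto.
    unfold Rdiv. rewrite Rmult_assoc, Rinv_l; lra.
Qed.

Lemma closure_below_id S g :
  (forall h, S h -> below_id h) -> closure01 S g -> below_id g.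
Proof.
  intros HS [_ Happrox] x Hx.
  split; apply Rle_plus_epsilon; intros e He;
    destruct (Happrox e He) as [h [Hh Hd]];
    specialize (Hd x Hx); specialize (HS h Hh x Hx);
    apply Rabs_le_between in Hd; lra.
Qed.

Lemma closure_dominates S D phi g :
  (forall x, D x -> 0 <= x <= 1) -> closure01 S g ->
  (forall h, S h -> dominates D phi h) -> dominates D phi g.
Proof.
  intros HD [_ Happrox] HS x Hx. apply Rle_plus_epsilon. intros e He.
  destruct (Happrox e He) as [h [Hh Hd]]. specialize (Hd x (HD x Hx)).
  specialize (HS h Hh x Hx). apply Rabs_le_between in Hd. lra.
Qed.

(* A dichotomy between two closed lower bounds also passes to uniform limits:
   if [g] violates the first bound at some point, so do all close enough
   approximants, which must therefore satisfy the second one. *)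
Lemma closure_dichotomy S D1 phi1 D2 phi2 g :
  (forall x, D1 x -> 0 <= x <= 1) -> (forall x, D2 x -> 0 <= x <= 1) ->
  closure01 S g ->
  (forall h, S h -> dominates D1 phi1 h \/ dominates D2 phi2 h) ->
  dominates D1 phi1 g \/ dominates D2 phi2 g.
Proof.
  intros HD1 HD2 Hg HS.
  destruct (classic (dominates D1 phi1 g)) as [Y | N]; [left; exact Y | right].
  apply not_all_ex_not in N. destruct N as [x1 N].
  apply imply_to_and in N. destruct N as [Hx1 Hgap]. apply Rnot_le_lt in Hgap.
  set (gap := phi1 x1 - g x1).
  assert (Hg' : closure01 (fun h => S h /\ Rabs (g x1 - h x1) <= gap / 2) g).
  { destruct Hg as [Hc Happrox]. split; [exact Hc |]. intros e He.
    destruct (Happrox (Rmin e (gap / 2)) ltac:(apply Rmin_pos; unfold gap; lra))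
      as [h [Hh Hd]].
    exists h. repeat split; auto.
    - specialize (Hd x1 (HD1 x1 Hx1)). pose proof (Rmin_r e (gap / 2)). lra.
    - intros x Hx. specialize (Hd x Hx). pose proof (Rmin_l e (gap / 2)). lra. }
  apply (closure_dominates _ _ _ _ HD2 Hg'). intros h [Hh Hclose].
  destruct (HS h Hh) as [Hdom1 | Hdom2]; [exfalso | exact Hdom2].
  specialize (Hdom1 x1 Hx1). apply Rabs_le_between in Hclose. unfold gap in *. lra.
Qed.

Lemma sum_scale_r (f : nat -> R) a n :
  sum_f_R0 (fun i => f i * a) n = sum_f_R0 f n * a.
Proof. induction n; simpl; [ring | rewrite IHn; ring]. Qed.

Lemma sum_weighted_le (lam f g : nat -> R) n :
  (forall i, (i <= n)%nat -> 0 <= lam i /\ f i <= g i) ->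
  sum_f_R0 (fun i => lam i * f i) n <= sum_f_R0 (fun i => lam i * g i) n.
Proof. intros H. apply sum_Rle. intros i Hi. destruct (H i Hi). nra. Qed.

Lemma sum_split_two (lam ind : nat -> R) A B n :
  sum_f_R0 (fun i => lam i * (ind i * A + (1 - ind i) * B)) n =
  sum_f_R0 (fun i => lam i * ind i) n * A +
  (sum_f_R0 lam n - sum_f_R0 (fun i => lam i * ind i) n) * B.
Proof. induction n; simpl; [ring | rewrite IHn; ring]. Qed.

Lemma conv_below_id S :
  (forall h, S h -> below_id h) -> forall h, conv01 S h -> below_id h.
Proof.
  intros HS h [n [lam [gs [Hi [Hsum Hh]]]]] x Hx. rewrite Hh by auto.
  assert (Hconst : forall a, sum_f_R0 (fun i => lam i * a) n = a).
  { intros a. rewrite sum_scale_r, Hsum. ring. }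
  split.
  - rewrite <- (Hconst 0) at 1. apply sum_weighted_le. intros i Hin.
    destruct (Hi i Hin) as [Hl Hg]. split; auto. apply (HS _ Hg x Hx).
  - apply Rle_trans with (sum_f_R0 (fun i => lam i * x) n); [| rewrite Hconst; lra].
    apply sum_weighted_le. intros i Hin.
    destruct (Hi i Hin) as [Hl Hg]. split; auto. apply (HS _ Hg x Hx).
Qed.

(* If each member of [S] is either [>= c x] or [>= x - eps] on (0,1], then a
   convex combination is [>= (c/2) x] or [>= (x - eps)/2]: split the weights
   according to the regime of each member; one part has mass [>= 1/2]. *)
Lemma conv_dichotomy S c eps : 0 < c ->
  (forall h, S h -> below_id h) ->
  (forall h, S h -> dominates (fun x => 0 < x <= 1) (fun x => c * x) h \/
                    dominates (fun x => 0 < x <= 1) (fun x => x - eps) h) ->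
  forall h, conv01 S h ->
    dominates (fun x => 0 < x <= 1) (fun x => c / 2 * x) h \/
    dominates (fun x => 0 < x <= 1) (fun x => (x - eps) / 2) h.
Proof.
  intros Hc Hbelow HS h [n [lam [gs [Hi [Hsum Hh]]]]].
  set (ind := fun i => if excluded_middle_informative
                 (dominates (fun x => 0 < x <= 1) (fun x => c * x) (gs i)) then 1 else 0).
  set (m := sum_f_R0 (fun i => lam i * ind i) n).
  assert (Hind : forall i, ind i = 0 \/ ind i = 1).
  { intros i. unfold ind. destruct excluded_middle_informative; auto. }
  assert (Hconst : forall a, sum_f_R0 (fun i => lam i * a) n = a).
  { intros a. rewrite sum_scale_r, Hsum. ring. }
  assert (Hm : 0 <= m <= 1).
  { unfold m. split.
    - rewrite <- (Hconst 0). apply sum_weighted_le. intros i Hin.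
      split; [apply Hi, Hin |]. destruct (Hind i); lra.
    - rewrite <- (Hconst 1). apply sum_weighted_le. intros i Hin.
      split; [apply Hi, Hin |]. destruct (Hind i); lra. }
  assert (Hmix : forall x, 0 < x <= 1 ->
     m * (c * x) + (1 - m) * Rmax 0 (x - eps) <= h x).
  { intros x Hx. rewrite Hh by lra. rewrite <- Hsum. unfold m. rewrite <- sum_split_two.
    apply sum_weighted_le. intros i Hin. destruct (Hi i Hin) as [Hl Hg]. split; auto.
    pose proof (Hbelow _ Hg x ltac:(lra)) as Hb.
    unfold ind. destruct excluded_middle_informative as [Y | N].
    - specialize (Y x Hx). simpl in Y. lra.
    - destruct (HS _ Hg) as [A | B]; [contradiction |]. specialize (B x Hx).
      assert (Rmax 0 (x - eps) <= gs i x) by (apply Rmax_lub; simpl in B; lra). lra. }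
  pose proof (fun x => Rmax_l 0 (x - eps)) as Hmax_l. pose proof (fun x => Rmax_r 0 (x - eps)) as Hmax_r.
  destruct (Rle_dec (1 / 2) m) as [Hm2 | Hm2]; [left | right]; intros x Hx;
    specialize (Hmix x Hx); simpl.
  - assert (0 <= (1 - m) * Rmax 0 (x - eps)) by (apply Rmult_le_pos; auto; lra).
    assert (c / 2 * x <= m * (c * x)) by (assert (0 < c * x) by nra; nra). lra.
  - assert (0 <= m * (c * x)) by (apply Rmult_le_pos; nra).
    specialize (Hmax_l x). specialize (Hmax_r x).
    assert (Rmax 0 (x - eps) / 2 <= (1 - m) * Rmax 0 (x - eps)) by nra. lra.
Qed.

Definition two_regimes (F : R -> R) : Prop :=
  forall eps, 0 < eps -> exists c, 0 < c /\
    forall delta, 0 < delta <= 1 -> exists A, 0 < A /\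
      forall y, A < y ->
        (forall x, delta <= x <= 1 -> c * x <= F (x * y) / F y) \/
        (forall x, 0 <= x <= 1 -> x - eps <= F (x * y) / F y).

Lemma E_F_below_id F : Orlicz F -> forall g, E_F F g -> below_id g.
Proof.
  intros HF g Hg. apply (closure_below_id (dilations F 1)); [| apply Hg; lra].
  apply dilation_below_id; auto; lra.
Qed.

(* The two regimes survive the passage to [E_F]; letting [delta] vary, the
   first regime then holds on all of (0,1]. *)
Lemma E_F_dichotomy F : Orlicz F -> two_regimes F ->
  forall eps, 0 < eps -> exists c, 0 < c /\ forall g, E_F F g ->
    dominates (fun x => 0 < x <= 1) (fun x => c * x) g \/
    dominates (fun x => 0 < x <= 1) (fun x => x - eps) g.
Proof.
  intros HF Hreg eps Heps. destruct (Hreg eps Heps) as [c [Hc Hc_reg]].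
  exists c. split; [exact Hc |]. intros g Hg.
  assert (Hdelta : forall delta, 0 < delta <= 1 ->
            dominates (fun x => delta <= x <= 1) (fun x => c * x) g \/
            dominates (fun x => 0 <= x <= 1) (fun x => x - eps) g).
  { intros delta Hdelta. destruct (Hc_reg delta Hdelta) as [A [HA Hy]].
    apply (closure_dichotomy (dilations F A)); [intros; lra | intros; lra | apply Hg, HA |].
    intros h [y [HAy Hh]].
    destruct (Hy y HAy) as [H1 | H2]; [left | right]; intros x Hx; rewrite Hh by lra; auto. }
  destruct (classic (dominates (fun x => 0 < x <= 1) (fun x => x - eps) g)) as [Y | N];
    [right; exact Y | left].
  intros x Hx. destruct (Hdelta x Hx) as [D1 | D2].
  - apply D1. lra.
  - exfalso. apply N. intros z Hz. apply D2. lra.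
Qed.

(* Under the two-regimes hypothesis every element of [C_F] is equivalent to the
   identity: either it dominates some [c x], or it dominates [(x - eps)/2] for
   every [eps], hence [x/2]. *)
Theorem C_F_equiv_identity F : Orlicz F -> two_regimes F ->
  equiv_each (C_F F) (fun t => t).
Proof.
  intros HF Hreg H HC.
  assert (Hb : below_id H).
  { apply (closure_below_id _ _ (conv_below_id _ (E_F_below_id F HF)) HC). }
  assert (Hdich : forall eps, 0 < eps -> exists c, 0 < c /\
            (dominates (fun x => 0 < x <= 1) (fun x => c / 2 * x) H \/
             dominates (fun x => 0 < x <= 1) (fun x => (x - eps) / 2) H)).
  { intros eps Heps. destruct (E_F_dichotomy F HF Hreg eps Heps) as [c [Hc HE]].
    exists c. split; [exact Hc |].
    apply (closure_dichotomy (conv01 (E_F F))); [intros; lra | intros; lra | exact HC |].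
    apply conv_dichotomy; auto. apply E_F_below_id, HF. }
  destruct (classic (exists c, 0 < c /\ dominates (fun x => 0 < x <= 1) (fun x => c * x) H))
    as [[c [Hc Hlow]] | Nlow].
  - exists (Rmax 1 (/ c)). pose proof (Rmax_l 1 (/ c)). pose proof (Rmax_r 1 (/ c)).
    split; [lra |]. intros t Ht. specialize (Hlow t Ht). specialize (Hb t ltac:(lra)). simpl in Hlow.
    split; [| nra].
    apply Rle_trans with (c * t); auto.
    rewrite <- (Rinv_inv c) at 2. apply Rmult_le_compat_r; [lra |].
    apply Rinv_le_contravar; auto. apply Rinv_0_lt_compat; auto.
  - exists 2. split; [lra |]. intros t Ht. specialize (Hb t ltac:(lra)). split; [| lra].
    apply Rle_plus_epsilon. intros e He.
    destruct (Hdich (2 * e) ltac:(lra)) as [c [Hc [Hlow | Hhigh]]].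
    + exfalso. apply Nlow. exists (c / 2). split; [lra | exact Hlow].
    + specialize (Hhigh t Ht). simpl in Hhigh. lra.
Qed.

Section Clusters.
Local Open Scope nat_scope.

(* The N-th cluster of indices starts at [4^N] and has length [j^2], where
   [j = cluster_type N] takes every value [>= 2] infinitely often. *)
Definition cluster_type (N : nat) : nat := S (N mod S (Nat.sqrt N)).
Definition cluster_len (N : nat) : nat := cluster_type N * cluster_type N.
Definition log4 (i : nat) : nat := Nat.log2 i / 2.

Lemma cluster_type_ge1 N : 1 <= cluster_type N.
Proof. unfold cluster_type; lia. Qed.

Lemma sq_le_pow4 N : S N * S N <= 4 ^ N.
Proof. induction N; simpl; [lia | nia]. Qed.

Lemma pow4_ge N : S N <= 4 ^ N.
Proof. pose proof (sq_le_pow4 N). nia. Qed.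

Lemma pow4_mono a b : a <= b -> 4 ^ a <= 4 ^ b.
Proof. intros; apply Nat.pow_le_mono_r; lia. Qed.

Lemma cluster_len_le N : cluster_len N <= 4 ^ N.
Proof.
  unfold cluster_len, cluster_type.
  pose proof (Nat.mod_upper_bound N (S (Nat.sqrt N)) ltac:(lia)).
  pose proof (Nat.sqrt_le_lin N). pose proof (sq_le_pow4 N). nia.
Qed.

Lemma log4_spec i : 1 <= i -> 4 ^ log4 i <= i < 4 ^ S (log4 i).
Proof.
  intros Hi. unfold log4. pose proof (Nat.log2_spec i ltac:(lia)) as [Hlo Hhi].
  set (k := Nat.log2 i) in *.
  pose proof (Nat.div_mod k 2 ltac:(lia)) as Hd.
  pose proof (Nat.mod_upper_bound k 2 ltac:(lia)) as Hm.
  assert (Hpow4 : forall e, 4 ^ e = 2 ^ (2 * e)) by (intros e; rewrite Nat.pow_mul_r; reflexivity).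
  rewrite !Hpow4. split.
  - eapply Nat.le_trans; [| exact Hlo]. apply Nat.pow_le_mono_r; lia.
  - eapply Nat.lt_le_trans; [exact Hhi |]. apply Nat.pow_le_mono_r; lia.
Qed.

Lemma log4_unique N i : 4 ^ N <= i < 4 ^ S N -> log4 i = N.
Proof.
  intros [H1 H2].
  assert (Hi : 1 <= i) by (pose proof (Nat.pow_nonzero 4 N ltac:(lia)); lia).
  pose proof (log4_spec i Hi) as [A B].
  destruct (Nat.lt_trichotomy (log4 i) N) as [Hl | [He | Hg]]; auto.
  - assert (4 ^ S (log4 i) <= 4 ^ N) by (apply pow4_mono; lia). lia.
  - assert (4 ^ S N <= 4 ^ log4 i) by (apply pow4_mono; lia). lia.
Qed.

Definition in_cluster (i : nat) : bool := (i - 4 ^ log4 i) <? cluster_len (log4 i).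

Lemma in_cluster_offset N d : d < cluster_len N ->
  log4 (4 ^ N + d) = N /\ in_cluster (4 ^ N + d) = true.
Proof.
  intros Hd. pose proof (cluster_len_le N).
  assert (HN : log4 (4 ^ N + d) = N) by (apply log4_unique; simpl; lia).
  split; [exact HN |]. unfold in_cluster. rewrite HN. apply Nat.ltb_lt. lia.
Qed.

Lemma in_cluster_range i : 1 <= i -> in_cluster i = true ->
  4 ^ log4 i <= i < 4 ^ log4 i + cluster_len (log4 i).
Proof.
  intros Hi Hc. unfold in_cluster in Hc. apply Nat.ltb_lt in Hc.
  pose proof (log4_spec i Hi). lia.
Qed.

Lemma clusters_separated W i i' : 8 * W + 8 <= i -> 1 <= i' ->
  in_cluster i = true -> in_cluster i' = true -> i' <= i + W -> i <= i' + W ->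
  log4 i' = log4 i.
Proof.
  intros Hi Hi' Hc Hc' H1 H2.
  pose proof (in_cluster_range i ltac:(lia) Hc) as [A B].
  pose proof (in_cluster_range i' Hi' Hc') as [A' B'].
  pose proof (cluster_len_le (log4 i)). pose proof (cluster_len_le (log4 i')).
  destruct (Nat.lt_trichotomy (log4 i') (log4 i)) as [Hl | [He | Hg]]; auto; exfalso.
  - destruct (log4 i) as [| N0] eqn:EN; [lia |].
    assert (4 ^ log4 i' <= 4 ^ N0) by (apply pow4_mono; lia).
    simpl in *. lia.
  - assert (4 ^ S (log4 i) <= 4 ^ log4 i') by (apply pow4_mono; lia).
    simpl in *. lia.
Qed.

Lemma cluster_type_recurs T M : T + 2 <= M -> cluster_type (M * M + T) = T + 2.
Proof.
  intros HM. unfold cluster_type.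
  assert (Hs : Nat.sqrt (M * M + T) = M) by (apply Nat.sqrt_unique; nia).
  rewrite Hs.
  assert ((M * M + T) mod S M = T + 1) as ->; [| lia].
  symmetry. apply (Nat.mod_unique _ _ (M - 1)); nia.
Qed.

End Clusters.

Lemma pow2_pos n : 0 < 2 ^ n.
Proof. apply pow_lt; lra. Qed.

Lemma pow2_mono a b : (a <= b)%nat -> 2 ^ a <= 2 ^ b.
Proof. intros; apply Rle_pow; [lra | auto]. Qed.

Lemma pow2_ge n : INR n + 1 <= 2 ^ n.
Proof.
  induction n; [simpl; lra |]. rewrite S_INR. change (2 ^ S n) with (2 * 2 ^ n).
  assert (1 <= 2 ^ n) by (apply pow_R1_Rle; lra). lra.
Qed.

Lemma pow2_div k n : (k <= n)%nat -> 2 ^ k / 2 ^ n = / 2 ^ (n - k).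
Proof.
  intros H. replace (2 ^ n) with (2 ^ k * 2 ^ (n - k)) by (rewrite <- pow_add; f_equal; lia).
  pose proof (pow2_pos k). pose proof (pow2_pos (n - k)). field. lra.
Qed.

Lemma up_pow2 z : z <= 2 ^ Z.to_nat (up z).
Proof.
  destruct (archimed z) as [Hup _]. destruct (Rle_dec z 0).
  - pose proof (pow2_pos (Z.to_nat (up z))). lra.
  - assert (0 <= up z)%Z by (apply le_IZR; lra).
    pose proof (pow2_ge (Z.to_nat (up z))) as Hpow.
    rewrite INR_IZR_INZ, Z2Nat.id in Hpow by auto. lra.
Qed.

Lemma INR_up_gt z : 0 < z -> z < INR (Z.to_nat (up z)).
Proof.
  intros Hz. destruct (archimed z) as [H1 _].
  assert (0 <= up z)%Z by (apply le_IZR; lra).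
  rewrite INR_IZR_INZ, Z2Nat.id by auto. lra.
Qed.

Lemma dyadic_aux k : forall y, 1 <= y < 2 ^ k -> exists n, 2 ^ n <= y < 2 ^ S n.
Proof.
  induction k; intros y Hy; [simpl in Hy; lra |].
  destruct (Rlt_dec y (2 ^ k)) as [H | H]; [apply IHk; lra | exists k; lra].
Qed.

Lemma dyadic y : 1 <= y -> exists n, 2 ^ n <= y < 2 ^ S n.
Proof.
  intros Hy. apply (dyadic_aux (S (Z.to_nat (up y)))). split; auto.
  pose proof (up_pow2 y). pose proof (pow2_pos (Z.to_nat (up y))). simpl. lra.
Qed.

Fixpoint psum (f : nat -> R) (n : nat) : R :=
  match n with O => 0 | S k => psum f k + f k end.

Lemma psum_mono f k n : (forall i, 0 <= f i) -> (k <= n)%nat -> psum f k <= psum f n.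
Proof. intros Hf H. induction H; [lra |]. simpl. specialize (Hf m). lra. Qed.

Lemma psum_nonneg f n : (forall i, 0 <= f i) -> 0 <= psum f n.
Proof. intros Hf. apply (psum_mono f 0 n Hf). lia. Qed.

Lemma psum_le_diff f g k q : (k <= q)%nat -> (forall i, (k <= i < q)%nat -> f i <= g i) ->
  psum f q - psum f k <= psum g q - psum g k.
Proof.
  intros H. induction H; intros Hfg; [lra |]. simpl.
  assert (f m <= g m) by (apply Hfg; lia).
  assert (psum f m - psum f k <= psum g m - psum g k) by (apply IHle; intros; apply Hfg; lia).
  lra.
Qed.

Lemma psum_const a q : psum (fun _ => a) q = INR q * a.
Proof. induction q; simpl psum; [simpl; ring | rewrite IHq, S_INR; ring]. Qed.

Lemma psum_scale a f q : psum (fun i => a * f i) q = a * psum f q.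
Proof. induction q; simpl; [ring | rewrite IHq; ring]. Qed.

Lemma psum_telescope f k : psum (fun i => f (S i) - f i) k = f k - f O.
Proof. induction k; simpl; [ring | rewrite IHk; ring]. Qed.

Lemma Rmax0_mono a b : a <= b -> Rmax 0 a <= Rmax 0 b.
Proof. intros. unfold Rmax. destruct Rle_dec; destruct Rle_dec; lra. Qed.

Lemma Rmax0_convex s t l c : 0 <= l <= 1 ->
  Rmax 0 (l * s + (1 - l) * t - c) <= l * Rmax 0 (s - c) + (1 - l) * Rmax 0 (t - c).
Proof.
  intros Hl. pose proof (Rmax_l 0 (s - c)). pose proof (Rmax_r 0 (s - c)).
  pose proof (Rmax_l 0 (t - c)). pose proof (Rmax_r 0 (t - c)).
  apply Rmax_lub; nra.
Qed.

Lemma Rmax0_lipschitz a b : Rabs (Rmax 0 a - Rmax 0 b) <= Rabs (a - b).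
Proof.
  unfold Rmax. destruct Rle_dec; destruct Rle_dec; unfold Rabs; repeat destruct Rcase_abs; lra.
Qed.

Lemma Rmax0_scale a b : 0 < a -> Rmax 0 (a * b) = a * Rmax 0 (b).
Proof. intros Ha. unfold Rmax. destruct Rle_dec; destruct Rle_dec; nra. Qed.

(* Both the Orlicz function and the model functions are sums of hinges
   [z |-> a_i (z - 2^i)_+] with nonnegative slopes [a_i]. *)
Definition hinge_sum (a : nat -> R) (k : nat) (z : R) : R :=
  psum (fun i => a i * Rmax 0 (z - 2 ^ i)) k.

Definition hinge_offset (a : nat -> R) (k : nat) : R := psum (fun i => a i * 2 ^ i) k.

Section HingeSums.
Variable a : nat -> R.
Hypothesis a_nonneg : forall i, 0 <= a i.

Lemma hinge_nonneg k z : 0 <= hinge_sum a k z.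
Proof.
  apply psum_nonneg. intros i. apply Rmult_le_pos; [apply a_nonneg | apply Rmax_l].
Qed.

Lemma hinge_mono k s t : s <= t -> hinge_sum a k s <= hinge_sum a k t.
Proof.
  intros H. unfold hinge_sum. induction k; simpl; [lra |]. pose proof (a_nonneg k).
  assert (a k * Rmax 0 (s - 2 ^ k) <= a k * Rmax 0 (t - 2 ^ k))
    by (apply Rmult_le_compat_l; [lra | apply Rmax0_mono; lra]).
  lra.
Qed.

Lemma hinge_convex k s t l : 0 <= l <= 1 ->
  hinge_sum a k (l * s + (1 - l) * t) <= l * hinge_sum a k s + (1 - l) * hinge_sum a k t.
Proof.
  intros Hl. unfold hinge_sum. induction k; simpl; [lra |].
  pose proof (a_nonneg k). pose proof (Rmax0_convex s t l (2 ^ k) Hl).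
  assert (a k * Rmax 0 (l * s + (1 - l) * t - 2 ^ k) <=
          a k * (l * Rmax 0 (s - 2 ^ k) + (1 - l) * Rmax 0 (t - 2 ^ k)))
    by (apply Rmult_le_compat_l; auto).
  nra.
Qed.

Lemma hinge_stable k d z : z <= 2 ^ k -> hinge_sum a (k + d) z = hinge_sum a k z.
Proof.
  intros Hz. unfold hinge_sum. induction d; [rewrite Nat.add_0_r; lra |].
  rewrite Nat.add_succ_r. simpl. rewrite IHd.
  assert (2 ^ k <= 2 ^ (k + d)) by (apply pow2_mono; lia).
  rewrite Rmax_left by lra. ring.
Qed.

Lemma hinge_upper k z : 0 <= z -> hinge_sum a k z <= psum a k * z.
Proof.
  intros Hz. unfold hinge_sum. induction k; simpl; [lra |].
  assert (Rmax 0 (z - 2 ^ k) <= z) by (apply Rmax_lub; [lra | pose proof (pow2_pos k); lra]).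
  pose proof (a_nonneg k).
  assert (a k * Rmax 0 (z - 2 ^ k) <= a k * z) by (apply Rmult_le_compat_l; lra).
  lra.
Qed.

Lemma hinge_lower k z : psum a k * z - hinge_offset a k <= hinge_sum a k z.
Proof.
  unfold hinge_sum, hinge_offset. induction k; simpl; [lra |].
  pose proof (Rmax_r 0 (z - 2 ^ k)). pose proof (a_nonneg k).
  assert (a k * (z - 2 ^ k) <= a k * Rmax 0 (z - 2 ^ k)) by (apply Rmult_le_compat_l; lra).
  lra.
Qed.

Lemma hinge_offset_le e k : (forall i, (e <= i < k)%nat -> a i = 0) ->
  hinge_offset a k <= 2 ^ e * psum a k.
Proof.
  unfold hinge_offset. induction k; intros Ha; simpl; [lra |].
  assert (IH : psum (fun i => a i * 2 ^ i) k <= 2 ^ e * psum a k)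
    by (apply IHk; intros; apply Ha; lia).
  destruct (Nat.lt_ge_cases k e) as [H | H].
  - assert (2 ^ k <= 2 ^ e) by (apply pow2_mono; lia). pose proof (a_nonneg k).
    assert (a k * 2 ^ k <= a k * 2 ^ e) by (apply Rmult_le_compat_l; lra). lra.
  - rewrite (Ha k ltac:(lia)). lra.
Qed.

Lemma hinge_lipschitz k u v :
  Rabs (hinge_sum a k u - hinge_sum a k v) <= psum a k * Rabs (u - v).
Proof.
  unfold hinge_sum. induction k; simpl; [rewrite Rminus_0_r, Rabs_R0; lra |].
  pose proof (a_nonneg k).
  replace (psum (fun i => a i * Rmax 0 (u - 2 ^ i)) k + a k * Rmax 0 (u - 2 ^ k) -
           (psum (fun i => a i * Rmax 0 (v - 2 ^ i)) k + a k * Rmax 0 (v - 2 ^ k)))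
    with ((psum (fun i => a i * Rmax 0 (u - 2 ^ i)) k -
           psum (fun i => a i * Rmax 0 (v - 2 ^ i)) k) +
          a k * (Rmax 0 (u - 2 ^ k) - Rmax 0 (v - 2 ^ k))) by ring.
  eapply Rle_trans; [apply Rabs_triang |]. rewrite Rabs_mult, (Rabs_right (a k)) by lra.
  pose proof (Rmax0_lipschitz (u - 2 ^ k) (v - 2 ^ k)) as Hlip.
  replace (u - 2 ^ k - (v - 2 ^ k)) with (u - v) in Hlip by ring.
  assert (a k * Rabs (Rmax 0 (u - 2 ^ k) - Rmax 0 (v - 2 ^ k)) <= a k * Rabs (u - v))
    by (apply Rmult_le_compat_l; lra).
  lra.
Qed.

Lemma hinge_at_one k : hinge_sum a k 1 = 0.
Proof.
  unfold hinge_sum. induction k; simpl; [reflexivity |]. rewrite IHk.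
  assert (1 <= 2 ^ k) by (apply pow_R1_Rle; lra). rewrite Rmax_left by lra. ring.
Qed.

Lemma hinge_at_top L k : (k <= L)%nat -> 2 ^ L / 2 * psum a k <= hinge_sum a k (2 ^ L).
Proof.
  unfold hinge_sum. induction k; intros Hk; simpl; [lra |].
  pose proof (IHk ltac:(lia)). pose proof (a_nonneg k).
  assert (2 ^ L / 2 <= Rmax 0 (2 ^ L - 2 ^ k)).
  { eapply Rle_trans; [| apply Rmax_r]. destruct L as [| L]; [lia |].
    assert (2 ^ k <= 2 ^ L) by (apply pow2_mono; lia). change (2 ^ S L) with (2 * 2 ^ L). lra. }
  assert (a k * (2 ^ L / 2) <= a k * Rmax 0 (2 ^ L - 2 ^ k)) by (apply Rmult_le_compat_l; auto).
  lra.
Qed.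

End HingeSums.

Definition rate (i : nat) : R :=
  if in_cluster i then / INR (cluster_type (log4 i)) else 0.
Definition cum_rate (n : nat) : R := psum rate n.
(* slope of [Phi] on the dyadic interval [2^n, 2^(n+1)] *)
Definition slope (n : nat) : R := exp (cum_rate n).
Definition slope_jump (i : nat) : R := slope (S i) - slope i.

Definition Phi_trunc (k : nat) (z : R) : R := z + hinge_sum slope_jump k z.
Definition Phi (z : R) : R := Phi_trunc (Z.to_nat (up z)) z.

Lemma INR_cluster_type_pos N : 0 < INR (cluster_type N).
Proof. apply lt_0_INR. pose proof (cluster_type_ge1 N); lia. Qed.

Lemma rate_nonneg i : 0 <= rate i.
Proof.
  unfold rate. destruct in_cluster; [| lra].
  left; apply Rinv_0_lt_compat, INR_cluster_type_pos.
Qed.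

Lemma exp_mono a b : a <= b -> exp a <= exp b.
Proof. intros [H | H]; [left; apply exp_increasing; auto | subst; lra]. Qed.

Lemma slope_pos n : 0 < slope n.
Proof. apply exp_pos. Qed.

Lemma slope_jump_nonneg i : 0 <= slope_jump i.
Proof.
  unfold slope_jump, slope, cum_rate. simpl. pose proof (rate_nonneg i).
  pose proof (exp_mono (psum rate i) (psum rate i + rate i) ltac:(lra)). lra.
Qed.

Lemma slope_jump_zero i : rate i = 0 -> slope_jump i = 0.
Proof. intros H. unfold slope_jump, slope, cum_rate. simpl. rewrite H, Rplus_0_r. ring. Qed.

Lemma psum_slope_jump k : psum slope_jump k = slope k - 1.
Proof.
  unfold slope_jump. rewrite psum_telescope. unfold slope, cum_rate. simpl. rewrite exp_0. ring.
Qed.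

Lemma Phi_eq k z : z <= 2 ^ k -> Phi z = Phi_trunc k z.
Proof.
  intros Hz. unfold Phi, Phi_trunc. f_equal. set (n := Z.to_nat (up z)).
  pose proof (up_pow2 z) as Hn. fold n in Hn.
  destruct (Nat.le_ge_cases k n) as [Hkn | Hnk].
  - replace n with (k + (n - k))%nat by lia. apply hinge_stable; auto.
  - replace k with (n + (k - n))%nat by lia. symmetry.
    apply hinge_stable; auto.
Qed.

Lemma Phi_ge_trunc k z : Phi_trunc k z <= Phi z.
Proof.
  set (n := Z.to_nat (up z)). pose proof (up_pow2 z) as Hn. fold n in Hn.
  assert (Hterm : forall i, 0 <= slope_jump i * Rmax 0 (z - 2 ^ i))
    by (intros i; apply Rmult_le_pos; [apply slope_jump_nonneg | apply Rmax_l]).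
  destruct (Nat.le_ge_cases k n) as [Hkn | Hnk].
  - unfold Phi, Phi_trunc, hinge_sum. fold n. pose proof (psum_mono _ k n Hterm Hkn). lra.
  - rewrite (Phi_eq k z); [lra |]. eapply Rle_trans; [exact Hn | apply pow2_mono; auto].
Qed.

Lemma Phi_ge z : z <= Phi z.
Proof.
  unfold Phi, Phi_trunc. pose proof (hinge_nonneg _ slope_jump_nonneg (Z.to_nat (up z)) z). lra.
Qed.

Lemma Phi_nonneg z : 0 <= z -> 0 <= Phi z.
Proof. intros. pose proof (Phi_ge z). lra. Qed.

Lemma Phi_Orlicz : Orlicz Phi.
Proof.
  assert (Hj := slope_jump_nonneg).
  split; [| split; [| split]].
  - rewrite (Phi_eq 0) by (simpl; lra). unfold Phi_trunc, hinge_sum. simpl. ring.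
  - intros s t Hs Hst. set (k := Z.to_nat (up t)).
    rewrite (Phi_eq k t) by apply up_pow2.
    rewrite (Phi_eq k s) by (pose proof (up_pow2 t) as Ht; fold k in Ht; lra).
    unfold Phi_trunc. pose proof (hinge_mono _ Hj k s t ltac:(lra)). lra.
  - intros s t l Hs Ht Hl. set (k := (Z.to_nat (up s) + Z.to_nat (up t))%nat).
    assert (Hs2 : s <= 2 ^ k) by (eapply Rle_trans; [apply up_pow2 | apply pow2_mono; unfold k; lia]).
    assert (Ht2 : t <= 2 ^ k) by (eapply Rle_trans; [apply up_pow2 | apply pow2_mono; unfold k; lia]).
    rewrite (Phi_eq k s Hs2), (Phi_eq k t Ht2), (Phi_eq k) by nra.
    unfold Phi_trunc. pose proof (hinge_convex _ Hj k s t l Hl). lra.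
  - intros M. exists M. intros t Ht. pose proof (Phi_ge t). lra.
Qed.

Lemma Phi_upper k z : 0 <= z -> z <= 2 ^ k -> Phi z <= slope k * z.
Proof.
  intros Hz0 Hzk. rewrite (Phi_eq k z Hzk). unfold Phi_trunc.
  pose proof (hinge_upper _ slope_jump_nonneg k z Hz0) as Hup. rewrite psum_slope_jump in Hup. lra.
Qed.

Lemma Phi_lower k z : slope k * (z - 2 ^ k) <= Phi z.
Proof.
  pose proof (Phi_ge_trunc k z) as Htrunc. unfold Phi_trunc in Htrunc.
  pose proof (hinge_lower _ slope_jump_nonneg k z).
  assert (hinge_offset slope_jump k <= 2 ^ k * psum slope_jump k)
    by (apply (hinge_offset_le _ slope_jump_nonneg); intros; lia).
  rewrite psum_slope_jump in *. pose proof (pow2_pos k). nra.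
Qed.

Lemma Phi_dilation_lower n k x y : (k <= n)%nat -> 0 <= x -> 2 ^ n <= y <= 2 ^ S n ->
  exp (- (cum_rate (S n) - cum_rate k)) * (x - / 2 ^ (n - k)) <= Phi (x * y) / Phi y.
Proof.
  intros Hk Hx Hy. pose proof (pow2_pos n). pose proof (pow2_pos k).
  rewrite <- pow2_div by exact Hk.
  assert (Hyp : 0 < Phi y) by (pose proof (Phi_ge y); lra).
  assert (Hf : 0 <= Phi (x * y) / Phi y)
    by (apply Rle_mult_inv_pos; [apply Phi_nonneg; nra | auto]).
  set (d := x - 2 ^ k / 2 ^ n).
  assert (Hratio : exp (- (cum_rate (S n) - cum_rate k)) * slope (S n) = slope k).
  { unfold slope. rewrite <- exp_plus. f_equal. ring. }
  pose proof (exp_pos (- (cum_rate (S n) - cum_rate k))) as He.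
  destruct (Rle_dec d 0) as [Hd | Hd]; [nra |].
  assert (Hup : Phi y <= slope (S n) * y) by (apply Phi_upper; lra).
  assert (Hlow : slope k * (x * y - 2 ^ k) <= Phi (x * y)) by apply Phi_lower.
  assert (Hdy : y * d <= x * y - 2 ^ k).
  { unfold d. assert (2 ^ k <= y * (2 ^ k / 2 ^ n)).
    { replace (y * (2 ^ k / 2 ^ n)) with (2 ^ k * (y / 2 ^ n)) by (field; lra).
      assert (1 <= y / 2 ^ n).
      { apply (Rmult_le_reg_r (2 ^ n)); auto. unfold Rdiv. rewrite Rmult_assoc, Rinv_l; lra. }
      nra. }
    nra. }
  pose proof (slope_pos k). pose proof (slope_pos (S n)).
  apply (Rmult_le_reg_r (Phi y)); auto.
  replace (Phi (x * y) / Phi y * Phi y) with (Phi (x * y)) by (field; lra).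
  apply Rle_trans with (exp (- (cum_rate (S n) - cum_rate k)) * d * (slope (S n) * y)).
  - apply Rmult_le_compat_l; [nra | auto].
  - replace (exp (- (cum_rate (S n) - cum_rate k)) * d * (slope (S n) * y))
      with (slope k * (y * d)) by (rewrite <- Hratio; ring).
    nra.
Qed.

Lemma Phi_dilation_defect n k x y : (k <= n)%nat -> 0 <= x -> 2 ^ n <= y <= 2 ^ S n ->
  x - Phi (x * y) / Phi y <= x * (cum_rate (S n) - cum_rate k) + / 2 ^ (n - k).
Proof.
  intros Hk Hx Hy. pose proof (Phi_dilation_lower n k x y Hk Hx Hy) as Hlow.
  set (G := cum_rate (S n) - cum_rate k) in *.
  assert (HG : 0 <= G)
    by (unfold G, cum_rate; pose proof (psum_mono rate k (S n) rate_nonneg ltac:(lia)); lra).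
  pose proof (exp_ineq1_le (- G)).
  assert (exp (- G) <= 1) by (rewrite <- exp_0; apply exp_mono; lra).
  assert (Hp : 0 < / 2 ^ (n - k)) by (apply Rinv_0_lt_compat, pow2_pos).
  nra.
Qed.

Definition slow_rate (J : nat) : R := / (2 * INR (S J) * (INR (2 * S J) + 2)).

(* Both error terms of the defect bound at scale [x ~ 2^-r] are at most
   [1/(2(J+1))] when the window is slow. *)
Lemma slow_error_bound J r : (r <= J)%nat ->
  / 2 ^ r * (INR (r + 2 + 2 * S J) * slow_rate J) + / 2 ^ (r + 1 + 2 * S J) <= / INR (S J).
Proof.
  intros Hr. set (m := (2 * S J)%nat).
  assert (HJ1 : 1 <= INR (S J)) by (rewrite S_INR; pose proof (pos_INR J); lra).
  assert (Hm : INR m = 2 * INR (S J)) by (unfold m; rewrite mult_INR; reflexivity).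
  pose proof (pow2_ge r). pose proof (pow2_pos r). pose proof (pos_INR r).
  assert (Hsc : 0 < 2 ^ r * (2 * INR (S J) * (INR m + 2)))
    by (apply Rmult_lt_0_compat; [lra | nra]).
  assert (Hdamp : / 2 ^ r * (INR (r + 2 + m) * slow_rate J) <= / (2 * INR (S J))).
  { unfold slow_rate. fold m. rewrite !plus_INR. change (INR 2) with 2.
    assert (Hq : INR r + 2 + INR m <= 2 ^ r * (INR m + 2)) by nra.
    replace (/ 2 ^ r * ((INR r + 2 + INR m) * / (2 * INR (S J) * (INR m + 2))))
      with ((INR r + 2 + INR m) * / (2 ^ r * (2 * INR (S J) * (INR m + 2)))) by (field; nra).
    replace (/ (2 * INR (S J)))
      with (2 ^ r * (INR m + 2) * / (2 ^ r * (2 * INR (S J) * (INR m + 2)))) by (field; nra).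
    apply Rmult_le_compat_r; [left; apply Rinv_0_lt_compat |]; lra. }
  assert (Hscale : / 2 ^ (r + 1 + m) <= / (2 * INR (S J))).
  { apply Rinv_le_contravar; [lra |].
    pose proof (pow2_ge (r + 1 + m)) as Hp. rewrite !plus_INR in Hp.
    change (INR 1) with 1 in Hp. lra. }
  assert (/ (2 * INR (S J)) + / (2 * INR (S J)) = / INR (S J)) by (field; lra).
  lra.
Qed.

Lemma slow_regime J n y : (S J + 2 * S J <= n)%nat ->
  (forall i, (n - (S J + 2 * S J) <= i <= n)%nat -> rate i <= slow_rate J) ->
  2 ^ n <= y < 2 ^ S n ->
  forall x, 0 <= x <= 1 -> x - / INR (S J) <= Phi (x * y) / Phi y.
Proof.
  intros Hn Hslow Hy x Hx. set (m := (2 * S J)%nat).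
  assert (HJ1 : 1 <= INR (S J)) by (rewrite S_INR; pose proof (pos_INR J); lra).
  assert (Hyp : 0 < Phi y) by (pose proof (Phi_ge y); pose proof (pow2_pos n); lra).
  assert (Hf0 : 0 <= Phi (x * y) / Phi y)
    by (apply Rle_mult_inv_pos; [apply Phi_nonneg; pose proof (pow2_pos n); nra | auto]).
  pose proof (Rinv_0_lt_compat _ (lt_0_INR (S J) ltac:(lia))).
  destruct (Req_dec x 0) as [-> | Hx0]; [lra |].
  destruct (dyadic (/ x)) as [r Hr].
  { replace 1 with (/ 1) by apply Rinv_1. apply Rinv_le_contravar; lra. }
  assert (Hxr : x <= / 2 ^ r).
  { rewrite <- (Rinv_inv x). apply Rinv_le_contravar; [apply pow2_pos | lra]. }
  pose proof (pow2_ge r). pose proof (pow2_pos r).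
  destruct (Nat.le_gt_cases (S J) r) as [Hrr | Hrr].
  { assert (/ 2 ^ r <= / INR (S J)).
    { apply Rinv_le_contravar; [lra |]. pose proof (le_INR _ _ Hrr). lra. }
    lra. }
  set (k := (n - (r + 1 + m))%nat).
  pose proof (Phi_dilation_defect n k x y ltac:(unfold k; lia) ltac:(lra) ltac:(lra)) as Hdef.
  replace (n - k)%nat with (r + 1 + m)%nat in Hdef by (unfold k, m in *; lia).
  set (G := cum_rate (S n) - cum_rate k) in *.
  assert (HG : G <= INR (r + 2 + m) * slow_rate J).
  { assert (Hsum : G <= psum (fun _ => slow_rate J) (S n) - psum (fun _ => slow_rate J) k).
    { apply psum_le_diff; [unfold k; lia |]. intros i Hi. apply Hslow. unfold k, m in *; lia. }
    rewrite !psum_const, <- Rmult_minus_distr_r, <- minus_INR in Hsum by (unfold k; lia).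
    replace (S n - k)%nat with (r + 2 + m)%nat in Hsum by (unfold k, m in *; lia). exact Hsum. }
  assert (HG0 : 0 <= G)
    by (unfold G, cum_rate; pose proof (psum_mono rate k (S n) rate_nonneg ltac:(unfold k; lia)); lra).
  assert (Hdamp : x * G <= / 2 ^ r * (INR (r + 2 + m) * slow_rate J))
    by (apply Rmult_le_compat; lra).
  pose proof (slow_error_bound J r ltac:(lia)) as Herr. fold m in Herr.
  lra.
Qed.

Definition interval_indicator (B L i : nat) : R :=
  if andb (Nat.leb B i) (Nat.ltb i (B + L)) then 1 else 0.

Lemma interval_indicator_nonneg B L i : 0 <= interval_indicator B L i.
Proof. unfold interval_indicator. destruct andb; lra. Qed.

Lemma psum_interval_indicator B L q : psum (interval_indicator B L) q <= INR L.
Proof.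
  enough (E : psum (interval_indicator B L) q = INR (Nat.min q (B + L) - B))
    by (rewrite E; apply le_INR; lia).
  induction q; [reflexivity |]. simpl psum. rewrite IHq. unfold interval_indicator.
  destruct (Nat.leb_spec B q); destruct (Nat.ltb_spec q (B + L)); simpl andb.
  - replace (Nat.min (S q) (B + L) - B)%nat with (S (Nat.min q (B + L) - B)) by lia.
    rewrite S_INR. ring.
  - replace (Nat.min (S q) (B + L) - B)%nat with (Nat.min q (B + L) - B)%nat by lia. ring.
  - replace (Nat.min (S q) (B + L) - B)%nat with (Nat.min q (B + L) - B)%nat by lia. ring.
  - replace (Nat.min (S q) (B + L) - B)%nat with (Nat.min q (B + L) - B)%nat by lia. ring.
Qed.

Lemma rate_nonzero i : rate i <> 0 -> in_cluster i = true.
Proof. unfold rate. destruct in_cluster; [reflexivity | lra]. Qed.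

(* Fast regime: a window of [W] scales far enough out meets at most one
   cluster, so the log-slope grows by at most the type [j] of that cluster,
   that is by [1 / rate i0] for any index [i0] of the window with nonzero rate. *)
Lemma window_growth W n s i0 : (n - W <= i0 <= n)%nat -> (8 * W + 8 <= i0)%nat ->
  rate i0 <> 0 -> (s <= W)%nat -> cum_rate (S n) - cum_rate (n - s) <= / rate i0.
Proof.
  intros Hi0 Hfar Hnz Hs.
  set (N := log4 i0). set (j := INR (cluster_type N)).
  set (ind := interval_indicator (4 ^ N) (cluster_len N)).
  assert (Hj : 0 < j) by apply INR_cluster_type_pos.
  assert (Hrate0 : rate i0 = / j) by (unfold rate; rewrite (rate_nonzero i0 Hnz); reflexivity).
  assert (Hpoint : forall i, (n - W <= i <= n)%nat -> rate i <= / j * ind i).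
  { intros i Hi. destruct (Req_dec (rate i) 0) as [Z | Z].
    - rewrite Z. apply Rmult_le_pos; [left; apply Rinv_0_lt_compat, Hj | apply interval_indicator_nonneg].
    - pose proof (rate_nonzero i Z) as Hc.
      assert (HN : log4 i = N)
        by (apply (clusters_separated W i0 i); auto; [lia | apply rate_nonzero; auto | lia | lia]).
      pose proof (in_cluster_range i ltac:(lia) Hc) as Hr. rewrite HN in Hr.
      unfold rate. rewrite Hc, HN. fold j. unfold ind, interval_indicator.
      destruct (Nat.leb_spec (4 ^ N) i); [| lia].
      destruct (Nat.ltb_spec i (4 ^ N + cluster_len N)); [| lia]. simpl. lra. }
  assert (Hgrowth : cum_rate (S n) - cum_rate (n - s) <=
                    psum (fun i => / j * ind i) (S n) - psum (fun i => / j * ind i) (n - s)).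
  { unfold cum_rate. apply psum_le_diff; [lia |]. intros i Hi. apply Hpoint. lia. }
  rewrite !psum_scale in Hgrowth.
  pose proof (psum_interval_indicator (4 ^ N) (cluster_len N) (S n)) as Hind. fold ind in Hind.
  pose proof (psum_nonneg ind (n - s) (interval_indicator_nonneg _ _)).
  assert (/ j * INR (cluster_len N) = j) by (unfold cluster_len; rewrite mult_INR; fold j; field; lra).
  rewrite Hrate0, Rinv_inv. pose proof (Rinv_0_lt_compat _ Hj). nra.
Qed.

Lemma fast_regime n s x y G : (s <= n)%nat -> 2 ^ n <= y <= 2 ^ S n ->
  cum_rate (S n) - cum_rate (n - s) <= G -> 2 * / 2 ^ s <= x ->
  exp (- G) / 2 * x <= Phi (x * y) / Phi y.
Proof.
  intros Hs Hy HG Hx. pose proof (pow2_pos s).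
  assert (0 < / 2 ^ s) by (apply Rinv_0_lt_compat; lra).
  pose proof (Phi_dilation_lower n (n - s) x y ltac:(lia) ltac:(lra) Hy) as Hlow.
  replace (n - (n - s))%nat with s in Hlow by lia.
  assert (exp (- G) <= exp (- (cum_rate (S n) - cum_rate (n - s)))) by (apply exp_mono; lra).
  pose proof (exp_pos (- G)). nra.
Qed.

Lemma Phi_two_regimes : two_regimes Phi.
Proof.
  intros eps Heps.
  set (J := Z.to_nat (up (/ eps))).
  assert (HJ : / INR (S J) <= eps).
  { pose proof (INR_up_gt (/ eps) ltac:(apply Rinv_0_lt_compat; lra)) as Hup. fold J in Hup.
    rewrite <- (Rinv_inv eps). apply Rinv_le_contravar; [apply Rinv_0_lt_compat; lra |].
    rewrite S_INR. lra. }
  set (al := slow_rate J).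
  assert (Hal : 0 < al).
  { unfold al, slow_rate. pose proof (pos_INR (2 * S J)). pose proof (lt_0_INR (S J) ltac:(lia)).
    apply Rinv_0_lt_compat. nra. }
  exists (exp (- / al) / 2). split; [pose proof (exp_pos (- / al)); lra |].
  intros delta Hd.
  set (s := Z.to_nat (up (2 / delta))).
  assert (Hs : 2 * / 2 ^ s <= delta).
  { pose proof (up_pow2 (2 / delta)) as Hup. fold s in Hup.
    assert (0 < 2 / delta) by (apply Rdiv_lt_0_compat; lra). pose proof (pow2_pos s).
    apply (Rmult_le_reg_r (2 ^ s)); [lra |].
    replace (2 * / 2 ^ s * 2 ^ s) with 2 by (field; lra).
    replace 2 with (2 / delta * delta) at 1 by (field; lra). nra. }
  set (W := Nat.max s (S J + 2 * S J)).
  exists (2 ^ (9 * W + 8)). split; [apply pow2_pos |].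
  intros y Hy.
  destruct (dyadic y) as [n Hn]; [pose proof (pow_R1_Rle 2 (9 * W + 8) ltac:(lra)); lra |].
  assert (Hnn : (9 * W + 8 <= n)%nat).
  { destruct (Nat.le_gt_cases (9 * W + 8) n) as [H | H]; auto. exfalso.
    assert (2 ^ S n <= 2 ^ (9 * W + 8)) by (apply pow2_mono; lia). lra. }
  destruct (classic (forall i, (n - W <= i <= n)%nat -> rate i <= al)) as [Hall | Hnot].
  - right. intros x Hx.
    apply Rle_trans with (x - / INR (S J)); [lra |].
    apply (slow_regime J n y); [unfold W in *; lia | | lra | exact Hx].
    intros i Hi. apply Hall. unfold W in *; lia.
  - left. apply not_all_ex_not in Hnot. destruct Hnot as [i0 Hi0].
    apply imply_to_and in Hi0. destruct Hi0 as [Hi0 Hbig]. apply Rnot_le_lt in Hbig.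
    intros x Hx. apply (fast_regime n s x y (/ al)); [unfold W in *; lia | lra | | lra].
    eapply Rle_trans;
      [apply (window_growth W n s i0); auto; [lia | lra | unfold W; lia] |].
    apply Rinv_le_contravar; lra.
Qed.

(* Its normalized profile [model_profile j] is what the
   dilations of [Phi] look like at the end of a cluster of type [j]. *)
Definition model_slope (j k : nat) : R := exp (INR k / INR j).
Definition model_jump (j k : nat) : R := model_slope j (S k) - model_slope j k.
Definition model (j : nat) (u : R) : R := u + hinge_sum (model_jump j) (j * j) u.
Definition model_profile (j : nat) (x : R) : R :=
  model j (2 ^ (j * j) * x) / model j (2 ^ (j * j)).

Lemma model_jump_nonneg j k : (1 <= j)%nat -> 0 <= model_jump j k.
Proof.
  intros Hj. unfold model_jump, model_slope. assert (0 < INR j) by (apply lt_0_INR; lia).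
  assert (Hk : INR k / INR j <= INR (S k) / INR j).
  { unfold Rdiv. apply Rmult_le_compat_r; [left; apply Rinv_0_lt_compat; auto |].
    rewrite S_INR; lra. }
  pose proof (exp_mono _ _ Hk). lra.
Qed.

Lemma psum_model_jump j k : psum (model_jump j) k = model_slope j k - 1.
Proof.
  unfold model_jump. rewrite psum_telescope. unfold model_slope.
  simpl. unfold Rdiv. rewrite Rmult_0_l, exp_0. reflexivity.
Qed.

Lemma model_mono j u v : (1 <= j)%nat -> u <= v -> model j u <= model j v.
Proof.
  intros Hj Huv. unfold model.
  pose proof (hinge_mono _ (fun k => model_jump_nonneg j k Hj) (j * j) u v Huv). lra.
Qed.

Lemma model_ge j u : (1 <= j)%nat -> u <= model j u.
Proof.
  intros Hj. unfold model.
  pose proof (hinge_nonneg _ (fun k => model_jump_nonneg j k Hj) (j * j) u). lra.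
Qed.

Lemma model_at_top j : (1 <= j)%nat -> 2 ^ (j * j) * (1 + INR j / 2) <= model j (2 ^ (j * j)).
Proof.
  intros Hj. unfold model.
  pose proof (hinge_at_top _ (fun k => model_jump_nonneg j k Hj) (j * j) (j * j) (le_n _)) as Htop.
  rewrite psum_model_jump in Htop. unfold model_slope in Htop.
  assert (Hexp : INR (j * j) / INR j = INR j) by (rewrite mult_INR; field; apply not_0_INR; lia).
  rewrite Hexp in Htop. pose proof (exp_ineq1_le (INR j)). pose proof (pow2_pos (j * j)). nra.
Qed.

Lemma model_profile_small j C : (1 <= j)%nat -> 0 < C -> 2 * C < INR j ->
  model_profile j (/ 2 ^ (j * j)) < / C * / 2 ^ (j * j).
Proof.
  intros Hj HC HjC. unfold model_profile. set (L := (j * j)%nat).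
  pose proof (pow2_pos L). rewrite Rinv_r by lra.
  unfold model at 1. rewrite hinge_at_one. fold L.
  pose proof (model_at_top j Hj) as Htop. fold L in Htop.
  set (P1 := model j (2 ^ L)) in *.
  assert (C * 2 ^ L < P1) by nra.
  replace (/ C * / 2 ^ L) with (/ (C * 2 ^ L)) by (field; lra).
  replace ((1 + 0) / P1) with (/ P1) by (field; nra).
  apply Rinv_lt_contravar; [apply Rmult_lt_0_compat; nra | auto].
Qed.

(* The profile is Lipschitz, hence continuous. *)
Lemma model_profile_continuous j : (1 <= j)%nat -> cont01 (model_profile j).
Proof.
  intros Hj x Hx eps He.
  set (L := (j * j)%nat). set (P1 := model j (2 ^ L)).
  assert (HP1 : 0 < P1) by (pose proof (model_ge j (2 ^ L) Hj); pose proof (pow2_pos L); unfold P1; lra).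
  set (K := model_slope j L * 2 ^ L / P1).
  assert (HK : 0 < K)
    by (unfold K, model_slope; pose proof (exp_pos (INR L / INR j)); pose proof (pow2_pos L);
        apply Rdiv_lt_0_compat; nra).
  exists (eps / K). split; [apply Rdiv_lt_0_compat; auto |].
  intros z Hz Hzx.
  assert (Hlip : Rabs (model_profile j z - model_profile j x) <= K * Rabs (z - x)).
  { unfold model_profile. fold L P1.
    replace (model j (2 ^ L * z) / P1 - model j (2 ^ L * x) / P1)
      with ((model j (2 ^ L * z) - model j (2 ^ L * x)) * / P1) by (field; lra).
    rewrite Rabs_mult, (Rabs_right (/ P1)) by (left; apply Rinv_0_lt_compat; auto).
    unfold model. fold L.
    pose proof (hinge_lipschitz _ (fun k => model_jump_nonneg j k Hj) L (2 ^ L * z) (2 ^ L * x)) as Hh.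
    rewrite psum_model_jump in Hh.
    pose proof (Rabs_triang (2 ^ L * z - 2 ^ L * x)
      (hinge_sum (model_jump j) L (2 ^ L * z) - hinge_sum (model_jump j) L (2 ^ L * x))) as Ht.
    replace (2 ^ L * z - 2 ^ L * x) with (2 ^ L * (z - x)) in * by ring.
    rewrite Rabs_mult, (Rabs_right (2 ^ L)) in Hh, Ht by (left; apply pow2_pos).
    unfold K. pose proof (pow2_pos L). pose proof (Rabs_pos (z - x)).
    assert (0 < / P1) by (apply Rinv_0_lt_compat; auto).
    apply Rle_trans with ((2 ^ L * Rabs (z - x) + (model_slope j L - 1) * (2 ^ L * Rabs (z - x))) * / P1).
    - apply Rmult_le_compat_r; [lra |].
      replace (2 ^ L * z + hinge_sum (model_jump j) L (2 ^ L * z) -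
               (2 ^ L * x + hinge_sum (model_jump j) L (2 ^ L * x)))
        with (2 ^ L * (z - x) + (hinge_sum (model_jump j) L (2 ^ L * z) -
               hinge_sum (model_jump j) L (2 ^ L * x))) by ring.
      lra.
    - right. field. lra. }
  apply Rle_lt_trans with (K * Rabs (z - x)); auto.
  replace eps with (K * (eps / K)) by (field; lra). apply Rmult_lt_compat_l; auto.
Qed.

(* Inside the N-th cluster, [Phi] is a rescaled copy of the model of the
   cluster's type. *)
Lemma cum_rate_cluster N d : (d <= cluster_len N)%nat ->
  cum_rate (4 ^ N + d) = cum_rate (4 ^ N) + INR d / INR (cluster_type N).
Proof.
  intros Hd. pose proof (INR_cluster_type_pos N). induction d.
  - rewrite Nat.add_0_r. unfold Rdiv. simpl. ring.
  - rewrite Nat.add_succ_r. unfold cum_rate in *. simpl psum. rewrite IHd by lia.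
    destruct (in_cluster_offset N d ltac:(lia)) as [HN Hc].
    unfold rate. rewrite Hc, HN, S_INR. field. lra.
Qed.

Lemma slope_jump_cluster N d : (d < cluster_len N)%nat ->
  slope_jump (4 ^ N + d) = slope (4 ^ N) * model_jump (cluster_type N) d.
Proof.
  intros Hd. unfold slope_jump, model_jump, model_slope, slope.
  rewrite <- Nat.add_succ_r, !cum_rate_cluster, !exp_plus by lia. ring.
Qed.

Lemma hinge_cluster N d z : (d <= cluster_len N)%nat ->
  hinge_sum slope_jump (4 ^ N + d) z = hinge_sum slope_jump (4 ^ N) z +
    slope (4 ^ N) * 2 ^ (4 ^ N) * hinge_sum (model_jump (cluster_type N)) d (z / 2 ^ (4 ^ N)).
Proof.
  intros Hd. pose proof (pow2_pos (4 ^ N)). unfold hinge_sum. induction d.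
  - rewrite Nat.add_0_r. simpl. ring.
  - rewrite Nat.add_succ_r. simpl psum. rewrite IHd by lia. rewrite slope_jump_cluster by lia.
    replace (z - 2 ^ (4 ^ N + d)) with (2 ^ (4 ^ N) * (z / 2 ^ (4 ^ N) - 2 ^ d))
      by (rewrite pow_add; field; lra).
    rewrite Rmax0_scale by auto. ring.
Qed.

Lemma slope_jump_gap N i : (1 <= N)%nat -> (2 * 4 ^ (N - 1) <= i < 4 ^ N)%nat ->
  slope_jump i = 0.
Proof.
  intros HN Hi. apply slope_jump_zero.
  destruct (Req_dec (rate i) 0) as [Z | Z]; auto. exfalso.
  assert (Hi1 : (1 <= i)%nat) by (pose proof (Nat.pow_nonzero 4 (N - 1) ltac:(lia)); lia).
  pose proof (in_cluster_range i Hi1 (rate_nonzero i Z)) as [A B].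
  pose proof (cluster_len_le (log4 i)).
  assert (log4 i < N)%nat.
  { destruct (Nat.lt_ge_cases (log4 i) N) as [H1 | H1]; auto.
    assert (4 ^ N <= 4 ^ log4 i)%nat by (apply pow4_mono; auto). lia. }
  assert (4 ^ log4 i <= 4 ^ (N - 1))%nat by (apply pow4_mono; lia). lia.
Qed.

(* Two-sided comparison of [Phi] on the N-th cluster with the rescaled model;
   the error comes from the hinges of the earlier clusters. *)
Lemma Phi_cluster N u : (1 <= N)%nat -> 0 <= u <= 2 ^ cluster_len N ->
  let D := slope (4 ^ N) * 2 ^ (4 ^ N) in
  D * model (cluster_type N) u - 2 ^ (2 * 4 ^ (N - 1)) * slope (4 ^ N) <= Phi (2 ^ (4 ^ N) * u)
  /\ Phi (2 ^ (4 ^ N) * u) <= D * model (cluster_type N) u.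
Proof.
  intros HN Hu D. pose proof (pow2_pos (4 ^ N)) as HB. set (z := 2 ^ (4 ^ N) * u).
  assert (Hz : z <= 2 ^ (4 ^ N + cluster_len N))
    by (unfold z; rewrite pow_add; apply Rmult_le_compat_l; lra).
  rewrite (Phi_eq _ _ Hz). unfold Phi_trunc. rewrite hinge_cluster by lia.
  replace (z / 2 ^ (4 ^ N)) with u by (unfold z; field; lra).
  assert (Hz0 : 0 <= z) by (unfold z; nra).
  pose proof (hinge_upper _ slope_jump_nonneg (4 ^ N) z Hz0).
  pose proof (hinge_lower _ slope_jump_nonneg (4 ^ N) z).
  assert (hinge_offset slope_jump (4 ^ N) <= 2 ^ (2 * 4 ^ (N - 1)) * psum slope_jump (4 ^ N)).
  { apply (hinge_offset_le _ slope_jump_nonneg). intros i Hi. apply (slope_jump_gap N i HN). lia. }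
  rewrite psum_slope_jump in *.
  pose proof (pow2_pos (2 * 4 ^ (N - 1))). pose proof (slope_pos (4 ^ N)).
  unfold D, model. unfold cluster_len in *. unfold z in *. split; nra.
Qed.

Lemma ratio_perturbation a b Px P1 D I : 0 < D -> 0 <= I <= D / 2 -> 1 <= P1 -> 0 <= Px <= P1 ->
  D * Px - I <= a <= D * Px -> D * P1 - I <= b <= D * P1 -> 0 <= a ->
  Rabs (Px / P1 - a / b) <= 2 * I / D.
Proof.
  intros HD HI HP1 HPx Ha Hb Ha0.
  assert (Hb2 : D * P1 / 2 <= b) by nra.
  assert (Hbp : 0 < b) by nra.
  set (num := Px * b - a * P1).
  assert (Hq : Px / P1 - a / b = num / (P1 * b)) by (unfold num; field; lra).
  assert (Hn : Rabs num <= I * P1) by (unfold num, Rabs; destruct Rcase_abs; nra).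
  rewrite Hq. unfold Rdiv. rewrite Rabs_mult, Rabs_inv, (Rabs_right (P1 * b)) by nra.
  apply Rle_trans with (I * P1 * / (P1 * b)).
  - apply Rmult_le_compat_r; [left; apply Rinv_0_lt_compat; nra | auto].
  - apply Rle_trans with (I * P1 * / (D * P1 / 2)).
    + apply Rmult_le_compat_l; [nra |]. apply Rinv_le_contravar; nra.
    + right. field. lra.
Qed.

Lemma dilation_near_profile N x : (1 <= N)%nat -> 0 <= x <= 1 ->
  Rabs (model_profile (cluster_type N) x -
        Phi (x * 2 ^ (4 ^ N + cluster_len N)) / Phi (2 ^ (4 ^ N + cluster_len N)))
    <= 2 * 2 ^ (2 * 4 ^ (N - 1)) / 2 ^ (4 ^ N).
Proof.
  intros HN Hx. set (j := cluster_type N). assert (Hj : (1 <= j)%nat) by apply cluster_type_ge1.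
  set (L := cluster_len N). set (B := (4 ^ N)%nat). set (E := (2 * 4 ^ (N - 1))%nat).
  pose proof (pow2_pos L). pose proof (pow2_pos B). pose proof (pow2_pos E).
  assert (HL1 : 1 <= 2 ^ L) by (apply pow_R1_Rle; lra).
  assert (Hux : 0 <= 2 ^ L * x <= 2 ^ L) by (split; nra).
  destruct (Phi_cluster N (2 ^ L * x) HN Hux) as [A1 A2].
  destruct (Phi_cluster N (2 ^ L) HN ltac:(split; [lra | right; reflexivity])) as [B1 B2].
  fold B j in A1, A2, B1, B2. fold E in A1, B1.
  replace (x * 2 ^ (B + L)) with (2 ^ B * (2 ^ L * x)) by (rewrite pow_add; ring).
  replace (2 ^ (B + L)) with (2 ^ B * 2 ^ L) by (rewrite pow_add; ring).
  unfold model_profile. fold j. change (j * j)%nat with L.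
  pose proof (slope_pos B).
  replace (2 * 2 ^ E / 2 ^ B) with (2 * (2 ^ E * slope B) / (slope B * 2 ^ B)) by (field; lra).
  assert (HEB : 2 * 2 ^ E <= 2 ^ B).
  { change (2 * 2 ^ E) with (2 ^ S E). apply pow2_mono. unfold E, B.
    destruct N as [| N']; [lia |]. replace (S N' - 1)%nat with N' by lia.
    rewrite Nat.pow_succ_r'. pose proof (Nat.pow_nonzero 4 N' ltac:(lia)). lia. }
  pose proof (model_ge j (2 ^ L) Hj). pose proof (model_ge j (2 ^ L * x) Hj).
  pose proof (model_mono j (2 ^ L * x) (2 ^ L) Hj ltac:(nra)).
  apply ratio_perturbation; try lra; [apply Rmult_lt_0_compat; lra | nra | apply Phi_nonneg; nra].
Qed.

(* Every profile of type [>= 2] belongs to [E_Phi]: clusters of that type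
   occur arbitrarily far out, and the approximation error above vanishes. *)
Lemma model_profile_in_E_F T : E_F Phi (model_profile (T + 2)).
Proof.
  intros A HA. split; [apply model_profile_continuous; lia |].
  intros eps He.
  assert (H4e : 0 < 4 / eps) by (apply Rdiv_lt_0_compat; lra).
  set (M0 := Z.to_nat (up (A + 4 / eps))).
  pose proof (INR_up_gt (A + 4 / eps) ltac:(lra)) as HM0. fold M0 in HM0.
  set (M := (M0 + T + 2)%nat). set (N := (M * M + T)%nat).
  assert (HjN : cluster_type N = (T + 2)%nat) by (apply cluster_type_recurs; unfold M; lia).
  assert (HN1 : (1 <= N)%nat) by (unfold N, M; nia).
  assert (HMN : (M0 <= 2 * 4 ^ (N - 1))%nat).
  { assert (HM0N : (M0 <= N)%nat) by (unfold N, M; nia).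
    destruct N as [| N']; [lia |]. replace (S N' - 1)%nat with N' by lia.
    pose proof (pow4_ge N'). lia. }
  set (G := (2 * 4 ^ (N - 1))%nat) in *.
  assert (HG : 4 / eps < 2 ^ G).
  { pose proof (pow2_ge G). pose proof (le_INR _ _ HMN). lra. }
  set (y := 2 ^ (4 ^ N + cluster_len N)).
  exists (fun x => Phi (x * y) / Phi y). split.
  - exists y. split; [| intros; reflexivity].
    unfold y. pose proof (pow2_ge (4 ^ N + cluster_len N)).
    assert (INR M0 <= INR (4 ^ N + cluster_len N)).
    { apply le_INR. pose proof (pow4_ge N). unfold N, M in *. nia. }
    lra.
  - intros x Hx. pose proof (dilation_near_profile N x HN1 Hx) as Ha.
    rewrite HjN in Ha. fold y in Ha. eapply Rle_trans; [exact Ha |]. fold G.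
    replace (4 ^ N)%nat with (G + G)%nat
      by (unfold G; destruct N as [| N']; [lia |]; replace (S N' - 1)%nat with N' by lia;
          rewrite Nat.pow_succ_r'; lia).
    rewrite pow_add. pose proof (pow2_pos G).
    replace (2 * 2 ^ G / (2 ^ G * 2 ^ G)) with (2 / 2 ^ G) by (field; lra).
    apply (Rmult_le_reg_r (2 ^ G)); auto. replace (2 / 2 ^ G * 2 ^ G) with 2 by (field; lra).
    assert (4 / eps * eps = 4) by (field; lra). nra.
Qed.

Lemma E_F_not_uniform : ~ equiv_unif (E_F Phi) (fun t => t).
Proof.
  intros [C [HC Hunif]].
  set (T := Z.to_nat (up (2 * C))).
  pose proof (INR_up_gt (2 * C) ltac:(lra)) as HT. fold T in HT.
  set (j := (T + 2)%nat).
  assert (Hj : 2 * C < INR j) by (unfold j; rewrite plus_INR; simpl; lra).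
  pose proof (model_profile_small j C ltac:(unfold j; lia) HC Hj) as Hsmall.
  pose proof (pow2_pos (j * j)).
  assert (Ht : 0 < / 2 ^ (j * j) <= 1).
  { split; [apply Rinv_0_lt_compat; auto |]. replace 1 with (/ 1) by apply Rinv_1.
    apply Rinv_le_contravar; [lra | apply pow_R1_Rle; lra]. }
  destruct (Hunif _ (model_profile_in_E_F T) _ Ht) as [Hlow _]. fold j in Hlow. lra.
Qed.

Theorem mainTheorem1 :
  exists Phi : R -> R, Orlicz Phi /\
    equiv_each (C_F Phi) (fun t => t) /\
    ~ equiv_unif (E_F Phi) (fun t => t).
Proof.
  exists Phi. split; [exact Phi_Orlicz |]. split.
  - apply C_F_equiv_identity; [exact Phi_Orlicz | exact Phi_two_regimes].
  - exact E_F_not_uniform.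
Qed.
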